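(* Let $p$ be a prime and $n\ge 3$. Every covering group $H$ of $\mathrm{UT}_n(\mathbb F_p)$ is a stem group, i.e. $Z(H)\le[H,H]$.
   Context: $\mathrm{UT}_n(\mathbb F_p)$ is the group of upper unitriangular $n\times n$ matrices over $\mathbb F_p$. A covering group of a finite group $G$ is a group $H$ with a subgroup $A\le Z(H)\cap[H,H]$ and $H/A\cong G$, of maximal order among such extensions (equivalently $|A|=|H_2(G,\mathbb Z)|$). *)

From HB Require Import structures.
From mathcomp Require Import all_boot all_order all_algebra all_fingroup all_solvable.
Set Implicit Arguments. Unset Strict Implicit. Unset Printing Implicit Defensive.
Import GRing.Theory.
Local Open Scope ring_scope.

Definition unitriangular (R : nzRingType) (m : nat) (M : 'M[R]_m) : bool :=
  [forall i : 'I_m, forall j : 'I_m, (M i j == (i == j)%:R) || (i < j)%N].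

(* UT_n(F_p) as a set of elements of GL_n(F_p) = {'GL_n['F_p]}
   (whose carrier is 'M['F_p]_(n.-1.+1); this is 'M_n for n >= 1). *)
Definition UT_set (n p : nat) : {set {'GL_n['F_p]}} :=
  [set g : {'GL_n['F_p]} | unitriangular (GLval g)].

Lemma UT_group_set n p : group_set (UT_set n p).
Proof.
apply/group_setP; split.
  rewrite inE; apply/forallP => i; apply/forallP => j.
  by rewrite GL_1E !mxE eqxx.
move=> x y; rewrite !inE => /forallP Hx /forallP Hy.
apply/forallP => i; apply/forallP => j; rewrite GL_MxE.
case: (ltnP i j) => [_|Hji]; first by rewrite orbT.
rewrite orbF !mxE (bigD1 i) //= big1 => [|k Hk].
  have /forallP/(_ j) := Hx i; have /forallP/(_ j) := Hy i.
  have /forallP/(_ i) := Hx i.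
  rewrite eqxx ltnn !orbF => /eqP ->; rewrite mul1r addr0.
  case: (eqVneq i j) => [<-|Hij]; first by rewrite ltnn !orbF.
  by rewrite ltnNge Hji !orbF.
have /forallP/(_ k) := Hx i; have /forallP/(_ j) := Hy k.
rewrite [i == k]eq_sym (negbTE Hk) /= => HY HX.
case: (ltnP i k) => Hik.
  have Hkj : (j < k)%N by apply: leq_ltn_trans Hji Hik.
  move: HY; rewrite ltnNge (ltnW Hkj) orbF.
  have -> : (k == j) = false by apply/negbTE; rewrite neq_ltn Hkj orbT.
  by move=> /eqP ->; rewrite mulr0.
move: HX; rewrite ltnNge Hik orbF => /eqP ->; by rewrite mul0r.
Qed.

Canonical UT_group n p := group (UT_group_set n p).

Notation UT n p := (UT_group n p).

Local Open Scope group_scope.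

Definition stem_ext (gT rT : finGroupType) (H A : {group gT}) (G : {set rT})
  : bool :=
  (A \subset 'Z(H) :&: [~: H, H]) && ((H / A) \isog G).

Definition covering_group (gT rT : finGroupType) (H : {group gT})
  (G : {set rT}) : Prop :=
  (exists A : {group gT}, stem_ext H A G) /\
  (forall (kT : finGroupType) (K B : {group kT}),
      stem_ext K B G -> (#|K| <= #|H|)%N).

Definition stem_group (gT : finGroupType) (H : {group gT}) : bool :=
  'Z(H) \subset [~: H, H].

From mathcomp Require Import all_boot all_order all_algebra all_fingroup all_solvable.
From mathcomp Require Import zify.
Import GRing.Theory.

(* Every stem extension of UT_n(F_p), n >= 3, is a stem group; in particular
   so is every covering group.

   The proof has a matrix part and a group-theoretic part.
   - Matrices: with t_ij(c) = 1 + c E_ij the elementary transvections, a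
     central element z of UT_n commutes with every t_{k,k+1}(1), hence with
     every E_{k,k+1}; this kills all off-diagonal entries of z except the
     corner one, so z = t_{0,n-1}(c).  The commutator identity
     [t_01(1), t_{1,n-1}(c)] = t_{0,n-1}(c) (which needs n >= 3) then gives
     Z(UT_n) <= UT_n'.
   - Groups: if A <= Z(H) ∩ H' then Z(H)/A <= Z(H/A) and H'/A = (H/A)', so
     Z(H/A) <= (H/A)' lifts to Z(H) <= H'; the hypothesis Z <= G' is
     invariant under isomorphism, so it transfers from UT_n to H/A. *)

Section Transvections.

Variables (p m : nat).
Local Notation M := ('M['F_p]_m.+1).
Local Notation GL := {'GL_m.+1['F_p]}.
Local Open Scope ring_scope.

(* The elementary transvection 1 + c E_ij as an element of GL_n (n = m+1);
   it is invertible whenever i != j (default value 1 otherwise). *)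
Definition transvection (i j : 'I_m.+1) (c : 'F_p) : GL :=
  insubd (1%g : GL) (1%:M + c *: delta_mx i j : M).

Lemma transvectionE {i j : 'I_m.+1} c :
  i != j -> GLval (transvection i j c) = 1%:M + c *: delta_mx i j.
Proof.
move=> neq_ij; rewrite /transvection val_insubd; case: ifP => // /negP[].
suff /mulmx1_unit[] :
  (1%:M + c *: delta_mx i j) *m (1%:M - c *: delta_mx i j) = 1%:M :> M by [].
rewrite mulmxBr mulmx1 mulmxDl mul1mx -scalemxAl -scalemxAr.
by rewrite mul_delta_mx_0 1?eq_sym // !scaler0 addr0 addrK.
Qed.

Lemma mulmx_delta_entry (A : M) (k l i j : 'I_m.+1) :
  (A *m delta_mx k l) i j = A i k * (j == l)%:R.
Proof.
rewrite mxE (bigD1 k) //= big1 ?addr0 => [|r neq_rk]; first by rewrite !mxE eqxx.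
by rewrite !mxE (negPf neq_rk) mulr0.
Qed.

Lemma delta_mulmx_entry (A : M) (k l i j : 'I_m.+1) :
  (delta_mx k l *m A) i j = (i == k)%:R * A l j.
Proof.
rewrite mxE (bigD1 l) //= big1 ?addr0 => [|r neq_rl].
  by rewrite !mxE eqxx andbT.
by rewrite !mxE (negPf neq_rl) andbF mul0r.
Qed.

Lemma transvection_UT {i j : 'I_m.+1} c :
  (i < j)%N -> transvection i j c \in UT m.+1 p.
Proof.
move=> lt_ij; rewrite inE transvectionE ?neq_ltn ?lt_ij //.
apply/forallP => a; apply/forallP => b; rewrite !mxE.
case: (ltnP a b) => [_|le_ba]; first by rewrite orbT.
suff /negPf-> : ~~ ((a == i) && (b == j)) by rewrite mulr0 addr0 eqxx.
by apply/negP => /andP[/eqP ai /eqP bj]; move: le_ba; rewrite ai bj leqNgt lt_ij.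
Qed.

Lemma corner_transvection_commg (c : 'F_p) : (1 < m)%N ->
  transvection ord0 ord_max c =
    [~ transvection ord0 (inord 1) 1%R, transvection (inord 1) ord_max c]%g.
Proof.
move=> gt1_m.
have val1 : nat_of_ord (inord 1 : 'I_m.+1) = 1%N by rewrite inordK // ltnW.
have d01 : (ord0 : 'I_m.+1) != inord 1 by rewrite -val_eqE /= val1.
have d1m : (inord 1 : 'I_m.+1) != ord_max by rewrite -val_eqE /= val1 neq_ltn gt1_m.
have d0m : (ord0 : 'I_m.+1) != ord_max by rewrite -val_eqE /= neq_ltn ltnW.
have := transvectionE 1 d01; have := transvectionE c d1m.
have := transvectionE c d0m.
move: (transvection ord0 (inord 1) 1) (transvection (inord 1) ord_max c).
move: (transvection ord0 ord_max c) => z a b Ez Eb Ea.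
suff comm_ba : (b * a * z = a * b)%g.
  by rewrite /commg /conjg -[z](mulKg (b * a)%g) comm_ba invMg !mulgA.
apply: val_inj; change (GLval (b * a * z) = GLval (a * b)).
rewrite !GL_MxE Ea Eb Ez scale1r.
rewrite !mulmxDl !mulmxDr !mul1mx !mulmx1 -!scalemxAl -!scalemxAr.
rewrite !mulmxDl !mul1mx -!scalemxAl !mul_delta_mx_cond !eqxx.
rewrite ![_ == ord0]eq_sym (negPf d01) (negPf d0m).
rewrite mulr0n mulr1n mul0mx !scaler0 !addr0 -!addrA; congr (_ + _).
by rewrite scaler0 addr0 addrA addrC.
Qed.

Lemma cent_UT_commute_superdiag {z : GL} {k : 'I_m.+1} : (k < m)%N ->
  (z \in 'C(UT m.+1 p))%g ->
  delta_mx k (inord k.+1) *m GLval z = GLval z *m delta_mx k (inord k.+1).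
Proof.
move=> lt_km /centP cent_z; set k1 : 'I_m.+1 := inord k.+1.
have lt_kk1 : (k < k1)%N by rewrite inordK.
have := cent_z _ (transvection_UT 1 lt_kk1).
have neq_kk1 : k != k1 by rewrite -val_eqE neq_ltn lt_kk1.
have := transvectionE 1 neq_kk1.
move: (transvection k k1 1) => t Et /(congr1 GLval).
by rewrite !GL_MxE Et scale1r mulmxDl mulmxDr mul1mx mulmx1 => /addrI.
Qed.

(* The centre of UT_n (n >= 3) consists of the corner transvections:
   commuting with E_{k,k+1} forces column k+1 and row k of z to vanish
   off the diagonal, for every k < n-1, which leaves only the corner entry. *)
Lemma center_UT_corner (z : GL) : (1 < m)%N -> (z \in 'Z(UT m.+1 p))%g ->
  GLval z = 1%:M + (GLval z ord0 ord_max) *: delta_mx ord0 ord_max.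
Proof.
move=> gt1_m /setIP[UTz cent_z].
have col0 (i j : 'I_m.+1) : (j < m)%N -> i != j -> GLval z i j = 0.
  move=> lt_jm neq_ij.
  have /matrixP/(_ i (inord j.+1)) := cent_UT_commute_superdiag lt_jm cent_z.
  by rewrite mulmx_delta_entry delta_mulmx_entry (negPf neq_ij) mul0r eqxx mulr1.
have row0 (i j : 'I_m.+1) : (0 < i)%N -> j != i -> GLval z i j = 0.
  move=> i_gt0 neq_ji; have lt_i1m : (i.-1 < m)%N by have := ltn_ord i; lia.
  have def_i : i = inord (inord i.-1 : 'I_m.+1).+1.
    by apply: val_inj; rewrite /= inordK ?prednK ?inordK //; lia.
  have lt_km : (@inord m i.-1 < m)%N by rewrite inordK //; lia.
  have /matrixP/(_ (inord i.-1) j) := cent_UT_commute_superdiag lt_km cent_z.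
  rewrite mulmx_delta_entry delta_mulmx_entry -def_i (negPf neq_ji) mulr0.
  by rewrite eqxx mul1r.
move: UTz; rewrite inE => /forallP UTz; apply/matrixP => i j; rewrite !mxE.
have /forallP/(_ j) := UTz i; case: (ltnP i j) => [lt_ij _ | le_ji]; last first.
  rewrite orbF => /eqP->; case: (i =P ord0) => [i0 | _]; last first.
    by rewrite mulr0 addr0.
  suff /negPf-> : j != ord_max by rewrite andbF mulr0 addr0.
  rewrite -val_eqE neq_ltn /=; move: le_ji; rewrite i0 /= leqn0 => /eqP->.
  by rewrite (ltnW gt1_m).
have neq_ij : i != j by rewrite -val_eqE neq_ltn lt_ij.
rewrite (negPf neq_ij) add0r; have [i0 | i_gt0] := posnP i; last first.
  have /negPf-> : i != ord0 by rewrite -val_eqE -lt0n.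
  by rewrite mulr0 (row0 i j i_gt0) // eq_sym.
have -> : i = ord0 by apply: val_inj.
case: (j =P ord_max) => [-> | neq_jm]; first by rewrite eqxx mulr1.
rewrite mulr0 col0 //; last by rewrite -val_eqE neq_ltn /= -i0 lt_ij.
rewrite ltn_neqAle -ltnS ltn_ord andbT.
by apply/eqP => eq_jm; apply: neq_jm; apply: val_inj.
Qed.

End Transvections.

Local Open Scope group_scope.

Lemma center_UT_sub_der (p m : nat) : (2 < m.+1)%N ->
  'Z(UT m.+1 p) \subset (UT m.+1 p)^`(1).
Proof.
move=> n_gt2; apply/subsetP => z Zz.
have d0m : (ord0 : 'I_m.+1) != ord_max by rewrite -val_eqE /= neq_ltn ltnW.
have -> : z = transvection p m ord0 ord_max (GLval z ord0 ord_max).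
  apply: val_inj; rewrite [RHS]transvectionE //.
  exact: center_UT_corner.
have val1 : nat_of_ord (inord 1 : 'I_m.+1) = 1%N by rewrite inordK // ltnW.
by rewrite corner_transvection_commg //; apply: mem_commg;
  apply: transvection_UT; rewrite val1.
Qed.

Lemma isog_center_sub_der (aT rT : finGroupType) (G : {group aT})
  (K : {group rT}) :
  G \isog K -> 'Z(K) \subset K^`(1) -> 'Z(G) \subset G^`(1).
Proof.
case/isogP=> f injf fG ZK.
rewrite -(injmSK injf) ?center_sub ?der_sub //.
by rewrite injm_center // morphim_der // fG.
Qed.

Lemma center_sub_der_lift (gT : finGroupType) (H A : {group gT}) :
  A \subset 'Z(H) -> A \subset [~: H, H] ->
  'Z(H / A) \subset (H / A)^`(1) -> 'Z(H) \subset [~: H, H].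
Proof.
move=> sAZ sAD ZQ.
have nAH : H \subset 'N(A).
  by rewrite (subset_trans _ (cent_sub A)) // centsC (subset_trans sAZ) ?subsetIr.
have nAZ : 'Z(H) \subset 'N(A) by rewrite (subset_trans (center_sub H)).
rewrite -(quotientSGK nAZ sAD) -[[~: H, H] / A]/(H^`(1) / A) quotient_der //.
apply: subset_trans ZQ; rewrite subsetI quotientS ?center_sub //=.
exact: subset_trans (quotientS _ (subsetIr _ _)) (quotient_cent _ _).
Qed.

Theorem mainTheorem14 (p n : nat) (p_prime : prime p) (n_ge3 : (3 <= n)%N)
  (gT : finGroupType) (H : {group gT}) :
  covering_group H (UT n p) -> stem_group H.
Proof.
case=> [[A /andP[sA_ZD isoHA]] _].
have [sAZ sAD] := subsetIP sA_ZD.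
case: n n_ge3 isoHA => [//|m] n_ge3 isoHA.
apply: center_sub_der_lift sAZ sAD _.
exact: isog_center_sub_der isoHA (center_UT_sub_der p m n_ge3).
Qed.
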